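(* Let $n\ge 8$ and let $T=(l_1,\dots,l_n)$, $l_1\le\cdots\le l_n$, be an impossibly burnable $n$-path forest of order $m^2$ with $l_1=M_n$. Then $B_m(l_i)\in\{3,4\}$ for every $i\in[n]$. Moreover, in this situation $l_1$ is odd (equivalently $B_m(l_1)=3$).
   Context: A path forest is a disjoint union of paths; an $n$-path forest is represented by the tuple $(l_1,\dots,l_n)$ of its path orders, with total order $\sum_i l_i=m^2$. For $m\in\mathbb{N}$ and an integer $1\le l\le m^2$, let $B_m(l)$ be the least positive integer $t$ with $t\equiv l\pmod 2$ such that $l\le 2mt-t^2$. An $n$-path forest of order $m^2$ is impossibly burnable if $\sum_{i=1}^n B_m(l_i)>m$. For $n\ge2$, $M_n$ denotes the maximum of $l_1$ over all impossibly burnable $n$-path forests. *)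

From mathcomp Require Import all_boot.
Set Implicit Arguments. Unset Strict Implicit. Unset Printing Implicit Defensive.

(* The defining condition for B_m(l): t positive, t = l (mod 2), l <= 2mt - t^2
   (stated without truncated subtraction as l + t^2 <= 2mt). *)
Definition B_cond (m l t : nat) : bool :=
  [&& 0 < t, odd t == odd l & l + t * t <= 2 * m * t].

(* For 1 <= l <= m^2 such a t
   always exists with t <= m+1, so searching 1..2m+2 in increasing order and
   taking the first hit yields exactly the least such t. *)
Definition B (m l : nat) : nat :=
  nth 0 [seq t <- iota 1 (2 * m + 2) | B_cond m l t] 0.

(* An n-path forest of order m^2, given by the list of its path orders. *)
Definition path_forest (n m : nat) (s : seq nat) : Prop :=
  [/\ size s = n, all (fun x => 0 < x) s & sumn s = m ^ 2].

Definition impossibly_burnable (m : nat) (s : seq nat) : Prop :=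
  m < sumn (map (B m) s).

(* The forest written with l_1 <= ... <= l_n; l_1 is nth 0 s 0. *)
Definition sorted_forest (n m : nat) (s : seq nat) : Prop :=
  path_forest n m s /\ sorted leq s.

(* "v = M_n": v is the maximum of l_1 over all impossibly burnable n-path
   forests (of order m^2, for any m). *)
Definition is_M (n v : nat) : Prop :=
  (exists m s, [/\ sorted_forest n m s, impossibly_burnable m s & nth 0 s 0 = v])
  /\ (forall m s, sorted_forest n m s -> impossibly_burnable m s -> nth 0 s 0 <= v).

From Stdlib Require Import ZArith Lia.
From mathcomp Require Import all_boot zify.
Set Implicit Arguments. Unset Strict Implicit. Unset Printing Implicit Defensive.

(* Split the paths into the [a] ones with [B <= 3] and the [b] ones with [B >= 4], and let [d]
   and [e] be the total deficit [sum (3 - B)] and excess [sum (B - 4)].  Since [B(l) = l] mod 2,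
   the sum of the [B]s is [m^2 = m] mod 2, hence at least [m + 2]: [m + 2 + d <= 3a + 4b + e].
   Minimality of [B] (the value [B - 2] fails) bounds every order from below, and summing gives
   [a l_1 + 4bm + 2me <= m^2 + 2b + 4e + e^2].  These inequalities exclude [B(l_1) >= 4]; and
   when [d + e > 0] they leave room, for some [2 <= w < n] and [m' = 4n - 2 - w], for a forest
   of order [m'^2] made of [w] paths of an odd order larger than [l_1] (so [B = 3]) and [n - w]
   paths of order about [4m'] (so [B = 4]).  Its [B]s add up to [3w + 4(n - w) = m' + 2], so it
   is impossibly burnable, contradicting [l_1 = M_n].  Hence [d = e = 0]: every [B] is 3 or 4,
   and [B(l_1) = 3] has the parity of [l_1]. *)

Lemma ltn_same_parity x y : x < y -> odd x = odd y -> x + 2 <= y.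
Proof.
move=> Hxy Hp; case: (leqP (x + 2) y) => // Hy.
have Ey : y = x.+1 by lia.
by move: Hp; rewrite Ey /=; case: (odd x).
Qed.

Lemma nth_filter_iota_least (P : pred nat) a k x :
  a <= x < a + k -> P x ->
  let t := nth 0 [seq y <- iota a k | P y] 0 in
  [/\ a <= t <= x, P t & forall y, a <= y < t -> ~~ P y].
Proof.
elim: k a => [|k IH] a Hx Px /=; first lia.
case: ifP => Pa /=; first by split=> //; [lia | move=> y; lia].
have Hx' : a.+1 <= x < a.+1 + k.
  by case: (ltngtP a x) Hx => [||Eax]; [lia | lia | rewrite -Eax Pa in Px].
have [Ht Pt Hmin] := IH a.+1 Hx' Px.
split=> //; first lia.
move=> y Hy; case: (ltngtP a y) => [Hay | | <-]; [apply: Hmin; lia | lia | by rewrite Pa].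
Qed.

Lemma mem_leq_sumn s x : x \in s -> x <= sumn s.
Proof. by elim: s => //= y s IH; rewrite inE => /orP [/eqP-> | /IH]; lia. Qed.

Lemma size_mul_leq_sumn L s : all (leq L) s -> size s * L <= sumn s.
Proof. by elim: s => //= l s IH /andP [HLl /IH]; lia. Qed.

Lemma path_nseq a x k s : a <= x -> path leq x s -> path leq a (nseq k x ++ s).
Proof.
elim: k a => [|k IH] a Hax Hs /=; last by rewrite Hax IH.
by case: s Hs => //= y s /andP [/(leq_trans Hax) -> ->].
Qed.

Lemma odd_even_split N w : 0 < w <= N -> odd N = odd w ->
  exists p r, [/\ odd p, ~~ odd r, N = w * p + r & N < w * (p + 2)].
Proof.
move=> /andP [w_gt0 HwN] HN.
have Hq : N %/ w * w <= N < (N %/ w).+1 * w by rewrite leq_divM ltn_ceil.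
have q_gt0 : 0 < N %/ w by rewrite divn_gt0.
set q := N %/ w in Hq q_gt0; set p := q - ~~ odd q.
have Hp : odd p by rewrite oddB ?oddb ?addbN ?addbb //; case: (odd q).
exists p, (N - w * p); split=> //; last by lia.
- by rewrite oddB ?oddM ?HN ?Hp ?andbT ?addbb //; lia.
- by lia.
Qed.

Section BurningNumber.
Variables (m l : nat).
Hypotheses (m_gt0 : 0 < m) (l_range : 0 < l <= m ^ 2).

Lemma B_spec :
  [/\ B_cond m l (B m l), B m l <= m & forall y, 0 < y < B m l -> ~~ B_cond m l y].
Proof.
have [t [Ht Htm]] : exists t, B_cond m l t /\ 0 < t <= m.
  case: (boolP (odd m == odd l)) => Hp.
    by exists m; split; [apply/and3P; split=> //; lia | lia].
  have Hl : l < m ^ 2.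
    rewrite ltn_neqAle (andP l_range).2 andbT.
    by apply: contra Hp => /eqP->; rewrite oddX /= eqxx.
  have Hm1 : 1 < m.
    rewrite ltn_neqAle m_gt0 andbT; apply: contraTneq Hl => <-.
    by rewrite exp1n -leqNgt (andP l_range).1.
  exists m.-1; split; last lia.
  have Hodd : odd m.-1 = odd l.
    by move: Hp; rewrite -{1}(prednK m_gt0) /=; case: (odd m.-1); case: (odd l).
  apply/and3P; split; [lia | by rewrite Hodd | rewrite -mulnn in Hl; nia].
have [Hle HB Hmin] := @nth_filter_iota_least (B_cond m l) 1 (2 * m + 2) t (ltac:(lia)) Ht.
rewrite -/(B m l) in Hle HB Hmin.
by split=> //; lia.
Qed.

Lemma B_gt0 : 0 < B m l.
Proof. by have [/and3P []] := B_spec. Qed.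

Lemma odd_B : odd (B m l) = odd l.
Proof. by have [/and3P [_ /eqP]] := B_spec. Qed.

Lemma B_le : B m l <= m.
Proof. by have [] := B_spec. Qed.

Lemma B_eq t : B_cond m l t -> (forall y, 0 < y < t -> ~~ B_cond m l y) -> B m l = t.
Proof.
move=> Ht Hmin; have [HB _ HBmin] := B_spec.
have t_gt0 : 0 < t by case/and3P: Ht.
case: (ltngtP (B m l) t) => // Hlt.
- have Hy : 0 < B m l < t by rewrite B_gt0 Hlt.
  by case/negP: (Hmin _ Hy).
- have Hy : 0 < t < B m l by rewrite t_gt0 Hlt.
  by case/negP: (HBmin _ Hy).
Qed.

(* [B - 2] has the parity of [l] but violates [B_cond]; parity then widens the gap to 2. *)
Lemma B_gap : 3 <= B m l -> 2 * m * (B m l - 2) + 2 <= l + (B m l - 2) * (B m l - 2).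
Proof.
move=> HB3; have [_ _ Hmin] := B_spec.
have Hpar : odd (B m l - 2) = odd l.
  by rewrite -odd_B -[in RHS](subnK (ltnW HB3)) oddD addbF.
have Hu : 0 < B m l - 2 < B m l by lia.
set u := B m l - 2 in Hpar Hu *.
have := Hmin u Hu; rewrite /B_cond (andP Hu).1 Hpar eqxx /= -ltnNge => Hlt.
apply: ltn_same_parity => //.
by rewrite !oddM oddD oddM Hpar andbb addbb.
Qed.

End BurningNumber.

Lemma B_eq3 m l : odd l -> 2 * m <= l -> l + 9 <= 6 * m -> B m l = 3.
Proof.
move=> Hodd Hlo Hhi.
have Hl : 0 < l <= m ^ 2 by have := (nat_AGM2 m 3).1; rewrite -!mulnn; nia.
apply: B_eq => //; [lia | by rewrite /B_cond Hodd /=; lia |].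
move=> y Hy; have [->|->] : y = 1 \/ y = 2 by lia.
all: by rewrite /B_cond Hodd //=; lia.
Qed.

Lemma B_eq4 m l : ~~ odd l -> 4 * m <= l + 2 -> l + 16 <= 8 * m -> B m l = 4.
Proof.
move=> /negbTE Heven Hlo Hhi.
have Hl : 0 < l <= m ^ 2 by have := (nat_AGM2 m 4).1; rewrite -!mulnn; nia.
apply: B_eq => //; [lia | by rewrite /B_cond Heven /=; lia |].
move=> y Hy; have [->|[->|->]] : y = 1 \/ y = 2 \/ y = 3 by lia.
all: by rewrite /B_cond Heven //=; lia.
Qed.

Lemma B_ge4_bound m l : 0 < m -> 0 < l <= m ^ 2 -> 4 <= B m l -> [/\
  4 * m + 2 * m * (B m l - 4) <= l + 2 + 4 * (B m l - 4) + (B m l - 4) ^ 2,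
  m * (B m l - 4) <= l & 4 * m <= l + 2].
Proof.
move=> m_gt0 l_range HB4.
have := B_gap m_gt0 l_range (ltnW HB4); have := B_le m_gt0 l_range.
rewrite -mulnn; set e := B m l - 4; have -> : B m l - 2 = e + 2 by lia.
move=> HBm Hgap; split; nia.
Qed.

Definition nsmall m (s : seq nat) := count (fun l => B m l <= 3) s.
Definition nlarge m (s : seq nat) := count (fun l => 4 <= B m l) s.
Definition deficit m (s : seq nat) := \sum_(l <- s | B m l <= 3) (3 - B m l).
Definition excess m (s : seq nat) := \sum_(l <- s | 4 <= B m l) (B m l - 4).

Lemma nsmall_add_nlarge m s : nsmall m s + nlarge m s = size s.
Proof.
rewrite -(count_predC (fun l => B m l <= 3) s); congr (_ + _).
by apply: eq_count => l /=; rewrite -ltnNge.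
Qed.

Lemma sumB_add_deficit m s :
  sumn (map (B m) s) + deficit m s = 3 * nsmall m s + 4 * nlarge m s + excess m s.
Proof.
elim: s => [|l s IH]; first by rewrite /deficit /excess !big_nil.
rewrite /deficit /excess !big_cons -/(deficit m s) -/(excess m s) /nsmall /nlarge /=.
rewrite -/(nsmall m s) -/(nlarge m s).
by case: (leqP (B m l) 3) => HB; lia.
Qed.

Section Aggregates.
Variable m : nat.
Hypothesis m_gt0 : 0 < m.

Lemma odd_sumn_B s : all (fun l => 0 < l <= m ^ 2) s ->
  odd (sumn (map (B m) s)) = odd (sumn s).
Proof.
elim: s => //= l s IH /andP [l_range /IH {}IH].
by rewrite !oddD IH odd_B.
Qed.

Lemma deficit_le s : all (fun l => 0 < l <= m ^ 2) s -> deficit m s <= 2 * nsmall m s.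
Proof.
elim: s => [|l s IH]; first by rewrite /deficit big_nil.
rewrite /= => /andP [l_range /IH {}IH].
rewrite /deficit big_cons -/(deficit m s) /nsmall /= -/(nsmall m s).
have := B_gt0 m_gt0 l_range; by case: (leqP (B m l) 3) => HB; lia.
Qed.

Lemma excess_le s : all (fun l => 0 < l <= m ^ 2) s -> excess m s <= m * nlarge m s.
Proof.
elim: s => [|l s IH]; first by rewrite /excess big_nil.
rewrite /= => /andP [l_range /IH {}IH].
rewrite /excess big_cons -/(excess m s) /nlarge /= -/(nlarge m s).
have := B_le m_gt0 l_range; by case: (leqP 4 (B m l)) => HB; lia.
Qed.

Lemma excess_mul_le s : all (fun l => 0 < l <= m ^ 2) s -> m * excess m s <= sumn s.
Proof.
elim: s => [|l s IH]; first by rewrite /excess big_nil muln0.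
rewrite /= => /andP [l_range /IH {}IH].
rewrite /excess big_cons -/(excess m s).
case: ifP => HB4; last lia.
have [_ Hl _] := B_ge4_bound m_gt0 l_range HB4; lia.
Qed.

(* Paths with [B <= 3] contribute at least [L] each, those with [B >= 4] satisfy [B_ge4_bound];
   the squares of the individual excesses add up to at most the square of the total. *)
Lemma order_lower_bound L s : all (fun l => (L <= l) && (0 < l <= m ^ 2)) s ->
  nsmall m s * L + nlarge m s * (4 * m) + 2 * m * excess m s
  <= sumn s + 2 * nlarge m s + 4 * excess m s + excess m s ^ 2.
Proof.
elim: s => [|l s IH]; first by rewrite /nsmall /nlarge /excess big_nil /=; lia.
rewrite /= => /andP [/andP [HLl l_range] /IH {}IH].
rewrite /excess big_cons -/(excess m s) /nsmall /nlarge /= -/(nsmall m s) -/(nlarge m s).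
rewrite -!mulnn in IH *.
case: (leqP 4 (B m l)) => HB; last lia.
have [Hl _ _] := B_ge4_bound m_gt0 l_range HB; rewrite -mulnn in Hl; nia.
Qed.

End Aggregates.

Lemma B34_of_balanced m s : deficit m s = 0 -> excess m s = 0 ->
  all (fun l => (B m l == 3) || (B m l == 4)) s.
Proof.
elim: s => [|l s IH] //; rewrite /deficit /excess !big_cons -/(deficit m s) -/(excess m s) /=.
by case: (leqP (B m l) 3) => HB Hd He; rewrite IH ?andbT; lia.
Qed.

Section ZArithmetic.
Local Open Scope Z_scope.

(* [slack n w = (4n-2-w)^2 - (n-w) (4(4n-2-w)-2)]: in order [(4n-2-w)^2], the room left for [w]
   paths once [n-w] paths of order [4(4n-2-w)-2] are placed. *)
Definition slack (n w : Z) : Z := w * (12 * n - 6 - 3 * w) - 6 * n + 4.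

Definition block_forest_fits (n L : Z) : Prop :=
  exists w, 2 <= w <= n - 1 /\ w * (L + 2) <= slack n w.

Lemma fits_of_le n L : 8 <= n -> L <= 10 * n - 16 -> block_forest_fits n L.
Proof. by move=> Hn HL; exists 3; rewrite /slack; lia. Qed.

Lemma fits_of_bound n a L : 8 <= n -> 1 <= a <= n - 1 -> 0 <= L ->
  a * L <= a * (12 * n - 2 - 3 * a) - 10 * n + 8 -> block_forest_fits n L.
Proof.
move=> Hn Ha HL HX.
have [Ha1|Ha1] := Z.eq_dec a 1; first by apply: fits_of_le; nia.
have [Hsmall|Hbig] := Z_le_gt_dec (3 * a) (2 * n - 2).
  by exists a; split; [lia | rewrite /slack; nia].
have [[En Ea]|Hne] : n = 8 /\ a = 7 \/ ~ (n = 8 /\ a = 7) by lia.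
  by subst; exists 5; rewrite /slack; lia.
(* with [w = a - 1] the claim is [a] times the hypothesis plus [n (4a-10) - 3a^2 - a + 8 >= 0] *)
have HP : 0 <= n * (4 * a - 10) - 3 * a * a - a + 8.
  have [Ha8|Ha8] := Z_le_gt_dec 8 a; first nia.
  have : a = 5 \/ a = 6 \/ a = 7 by lia.
  by case=> [Ea|[Ea|Ea]]; subst; lia.
exists (a - 1); split; first lia.
apply/(Z.mul_le_mono_pos_l _ _ a); first lia.
rewrite /slack; nia.
Qed.

Lemma fits_of_quad_bound n a b L x : 8 <= n -> 1 <= a -> 1 <= b -> a + b = n ->
  0 <= x <= 4 * n - 3 - a -> 10 * n - 15 <= L ->
  a * L <= x ^ 2 - b * (4 * x - 2) -> block_forest_fits n L.
Proof.
move=> Hn Ha Hb Hab Hx HL H.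
have [Hs|Hs] := Z_le_gt_dec x (4 * b).
  have : 0 <= x * (4 * b - x) by apply: Z.mul_nonneg_nonneg; lia.
  nia.
apply: (@fits_of_bound n a); [lia | lia | lia |].
have : 0 <= (4 * n - 3 - a - x) * (4 * n - 3 - a + x - 4 * b).
  by apply: Z.mul_nonneg_nonneg; lia.
by subst n; nia.
Qed.

Lemma fits_of_quad_bound_sub n a b L x : 8 <= n -> 1 <= a -> 1 <= b -> a + b = n ->
  0 <= x <= 4 * n - 1 - a -> 10 * n - 15 <= L ->
  a * L <= x ^ 2 - b * (4 * x - 2) - (2 * x - 5) -> block_forest_fits n L.
Proof.
move=> Hn Ha Hb Hab Hx HL H.
have [Hs|Hs] := Z_le_gt_dec x (4 * b + 2).
  have : 0 <= x * (4 * b + 2 - x) by apply: Z.mul_nonneg_nonneg; lia.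
  nia.
apply: (@fits_of_bound n a); [lia | lia | lia |].
have : 0 <= (4 * n - 1 - a - x) * (4 * n - 1 - a + x - 4 * b - 2).
  by apply: Z.mul_nonneg_nonneg; lia.
by subst n; nia.
Qed.

Lemma fits_of_forest_bounds n m L a b d e :
  8 <= n -> 1 <= m -> 1 <= L -> 1 <= a -> 0 <= b -> 0 <= d -> 0 <= e -> a + b = n ->
  m + 2 <= 3 * a - d + 4 * b + e ->
  a * L + b * (4 * m - 2) + (2 * m - 4) * e - e ^ 2 <= m ^ 2 ->
  e <= m -> d <= 2 * a -> e <= m * b -> n * L <= m ^ 2 -> 1 <= d + e ->
  block_forest_fits n L.
Proof.
move=> Hn Hm HL1 Ha Hb Hd He Hab Hsum Horder Hem Hda Heb HnL Hde.
have [HL|HL] := Z_le_gt_dec L (10 * n - 16); first exact: fits_of_le.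
have Hm5 : 5 <= m.
  have [//|Hm4] := Z_le_gt_dec 5 m.
  have : 8 * L <= n * L by apply: Z.mul_le_mono_nonneg_r; lia.
  nia.
have [He0|He0] := Z.eq_dec e 0.
  subst e; have [Hb0|Hb0] := Z.eq_dec b 0.
    have Hm3 : m <= 3 * n - 3 by lia.
    have : m ^ 2 <= (3 * n - 3) ^ 2 by apply: Z.pow_le_mono_l; lia.
    have : n * (10 * n - 15) <= n * L by apply: Z.mul_le_mono_nonneg_l; lia.
    nia.
  by apply: (@fits_of_quad_bound n a b L m); lia.
have Hb1 : 1 <= b by nia.
set e0 := m + 2 - 4 * n + a + d.
have [He01|He01] := Z_le_gt_dec e0 1.
  apply: (@fits_of_quad_bound_sub n a b L m); [lia | lia | lia | lia | lia | lia |].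
  have : 0 <= (e - 1) * (2 * m - 5 - e) by apply: Z.mul_nonneg_nonneg; lia.
  lia.
apply: (@fits_of_quad_bound_sub n a b L (4 * n - 1 - a - d)); [lia | lia | lia | lia | lia | lia |].
have : 0 <= (e - e0) * (2 * m - 4 - e - e0) by apply: Z.mul_nonneg_nonneg; lia.
have : 0 <= (b - 1) * (m - (4 * n - 1 - a - d)) by apply: Z.mul_nonneg_nonneg; lia.
rewrite /e0; lia.
Qed.

Lemma no_large_first_path n m L a b d e :
  8 <= n -> 1 <= m -> 0 <= a -> 0 <= b -> 0 <= d -> 0 <= e -> a + b = n ->
  m + 2 <= 3 * a - d + 4 * b + e ->
  a * L + b * (4 * m - 2) + (2 * m - 4) * e - e ^ 2 <= m ^ 2 ->
  e <= m -> d <= 2 * a -> 4 * m - 3 <= L -> False.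
Proof.
move=> Hn Hm Ha Hb Hd He Hab Hsum Horder Hem Hda HL.
have HaL : a * (4 * m - 3) <= a * L by apply: Z.mul_le_mono_nonneg_l; lia.
have {}Horder : n * (4 * m - 3) + (2 * m - 4) * e - e ^ 2 <= m ^ 2 by subst n; lia.
have [Hm4|Hm4] := Z_le_gt_dec m 4.
  have Hn8 : 8 * (4 * m - 3) <= n * (4 * m - 3) by apply: Z.mul_le_mono_nonneg_r; lia.
  have : m = 1 \/ m = 2 \/ m = 3 \/ m = 4 by lia.
  by case=> [Em|[Em|[Em|Em]]]; subst m; nia.
have He2 : 0 <= e * (2 * m - 4 - e) by apply: Z.mul_nonneg_nonneg; lia.
have Hm4n : 4 * n <= m.
  have [//|Hlt] := Z_le_gt_dec (4 * n) m.
  have Hprod : 0 <= (m - 1) * (4 * n - m - 1) by apply: Z.mul_nonneg_nonneg; lia.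
  lia.
have He3 : 0 <= (e - (m + 2 - 4 * n)) * (m - 6 + 4 * n - e) by apply: Z.mul_nonneg_nonneg; lia.
have Hn4 : 0 <= (4 * n - 4) * (m - 4 * n) by apply: Z.mul_nonneg_nonneg; lia.
lia.
Qed.

End ZArithmetic.

Lemma block_forest k b m p c r : 0 < k -> 0 < b -> 0 < p <= c ->
  B m p = 3 -> B m c = 4 -> B m (c + r) = 4 ->
  k * p + b * c + r = m ^ 2 -> m < 3 * k + 4 * b ->
  let s := nseq k p ++ nseq b.-1 c ++ [:: c + r] in
  [/\ sorted_forest (k + b) m s, impossibly_burnable m s & nth 0 s 0 = p].
Proof.
move=> k_gt0 b_gt0 Hpc Bp Bc Bcr Horder HB s.
have Eb : b = b.-1.+1 by rewrite prednK.
have Ek : k = k.-1.+1 by rewrite prednK.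
split; last by rewrite /s Ek.
- split; last by rewrite /s Ek /= path_nseq ?path_nseq //= ?leq_addr; lia.
  split.
  + by rewrite /s !size_cat !size_nseq /=; lia.
  + by rewrite /s !all_cat !all_nseq /=; lia.
  + by rewrite /s !sumn_cat !sumn_nseq /= -Horder {2}Eb; lia.
- by rewrite /impossibly_burnable /s !map_cat !sumn_cat !map_nseq !sumn_nseq /= Bp Bc Bcr; lia.
Qed.

Lemma block_forest_budget k b m c : 2 <= k -> 0 < b -> 8 <= k + b ->
  m + 2 = 4 * b + 3 * k -> c + 2 = 4 * m ->
  k * (2 * m + 2) + b * c <= m ^ 2 <= 3 * (k * m) + b * c.
Proof.
move=> Hk Hb Hkb Hm Hc.
have Hmm : m ^ 2 + 2 * m = 4 * (b * m) + 3 * (k * m).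
  by have := congr1 (muln m) Hm; rewrite -mulnn; lia.
have Hbc : b * c + 2 * b = 4 * (b * m) by have := congr1 (muln b) Hc; lia.
apply/andP; split; last lia.
have [Ek|Hk3] : k = 2 \/ 3 <= k by lia.
  by subst k; lia.
have : 3 * m <= k * m by rewrite leq_mul2r Hk3 orbT.
lia.
Qed.

Lemma fits_larger_forest n L : 8 <= n -> block_forest_fits (Z.of_nat n) (Z.of_nat L) ->
  exists m s, [/\ sorted_forest n m s, impossibly_burnable m s & L < nth 0 s 0].
Proof.
move=> Hn [wZ [Hw Hfit]].
have [k Ek] : exists k, wZ = Z.of_nat k by exists (Z.to_nat wZ); lia.
subst wZ; rewrite /slack in Hfit.
set b := n - k; set m := 4 * n - 2 - k; set c := 4 * m - 2.
have Hb : k + b = n by lia.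
have Hm : m + 2 = 4 * b + 3 * k by lia.
have Hc : c + 2 = 4 * m by lia.
have HfitL : k * (L + 2) + b * c <= m ^ 2 by rewrite -mulnn /c /m /b; nia.
have Hk : 2 <= k < n by lia.
clearbody b m c; clear Hw Hfit.
have /andP [Hlo Hhi] := @block_forest_budget k b m c (ltac:(lia)) (ltac:(lia)) (ltac:(lia)) Hm Hc.
have [N HN] : exists N, N + b * c = m ^ 2 by exists (m ^ 2 - b * c); lia.
have c_even : ~~ odd c.
  by have := congr1 odd Hc; rewrite oddD oddM /= addbF => ->.
have HoddN : odd N = odd k.
  have := congr1 odd Hm; rewrite (oddD m) (oddD (4 * b)) !oddM /= addbF => <-.
  by have := congr1 odd HN; rewrite oddD oddM (negbTE c_even) andbF addbF oddX /= => ->.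
have [p [r [Hp Hr HNp HNp2]]] := @odd_even_split N k (ltac:(lia)) HoddN.
have HLp : L < p.
  have HkLp : k * (L + 2) < k * (p + 2) by lia.
  by rewrite ltn_pmul2l in HkLp; lia.
have Hmp : 2 * m < p.
  have Hkmp : k * (2 * m + 2) < k * (p + 2) by lia.
  by rewrite ltn_pmul2l in Hkmp; lia.
have Hpm : p <= 3 * m.
  have Hkpm : k * p <= k * (3 * m) by lia.
  by rewrite leq_pmul2l in Hkpm; lia.
have cr_even : ~~ odd (c + r) by rewrite oddD (negbTE c_even) (negbTE Hr).
have [Hs ib Hs0] := @block_forest k b m p c r (ltac:(lia)) (ltac:(lia)) (ltac:(lia))
  (B_eq3 (m := m) Hp (ltnW Hmp) (ltac:(lia)))
  (B_eq4 (m := m) c_even (ltac:(lia)) (ltac:(lia)))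
  (B_eq4 (m := m) cr_even (ltac:(lia)) (ltac:(lia)))
  (ltac:(lia)) (ltac:(lia)).
by exists m, (nseq k p ++ nseq b.-1 c ++ [:: c + r]); rewrite -Hb Hs0.
Qed.

Section Forest.
Variables (n m L : nat) (s : seq nat).
Hypothesis forest : sorted_forest n m (L :: s).
Hypothesis ib : impossibly_burnable m (L :: s).
Local Notation t := (L :: s).

Lemma forest_range : all (fun l => (L <= l) && (0 < l <= m ^ 2)) t.
Proof.
case: forest => [[_ Hpos Hsum] Hsorted].
apply/allP => l Hl; rewrite (allP Hpos l Hl) -Hsum mem_leq_sumn // !andbT.
by move: Hl; rewrite inE => /orP [/eqP-> | /(allP (order_path_min leq_trans Hsorted))].
Qed.

Lemma forest_m_gt0 : 0 < m.
Proof. by have /andP [_ /andP [L_gt0]] := allP forest_range L (mem_head _ _); rewrite -mulnn; nia. Qed.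

Lemma forest_ineqs : [/\
  nsmall m t + nlarge m t = n,
  m + 2 + deficit m t <= 3 * nsmall m t + 4 * nlarge m t + excess m t,
  nsmall m t * L + nlarge m t * (4 * m) + 2 * m * excess m t
    <= m ^ 2 + 2 * nlarge m t + 4 * excess m t + excess m t ^ 2,
  [/\ excess m t <= m, deficit m t <= 2 * nsmall m t & excess m t <= m * nlarge m t]
  & n * L <= m ^ 2].
Proof.
case: forest => [[Hsize _ Hsum] Hsorted].
have m_gt0 := forest_m_gt0.
have range := forest_range.
have range' : all (fun l => 0 < l <= m ^ 2) t by apply: sub_all range => l /andP [].
have Hsum_par : m + 2 <= sumn (map (B m) t).
  apply: ltn_same_parity ib _.
  by rewrite odd_sumn_B // Hsum oddX.
split.
- by rewrite nsmall_add_nlarge.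
- by have := sumB_add_deficit m t; lia.
- by rewrite -Hsum; apply: order_lower_bound.
- split; [| exact: deficit_le | exact: excess_le].
  have := excess_mul_le m_gt0 range'; rewrite Hsum -mulnn leq_pmul2l //.
- rewrite -Hsize -Hsum; apply: size_mul_leq_sumn.
  by apply: sub_all range => l /andP [].
Qed.

Lemma forest_first_B_le3 : 8 <= n -> B m L <= 3.
Proof.
move=> n8; rewrite leqNgt; apply/negP => HB4.
have [Hab Hsum Horder [Hem Hda Heb] _] := forest_ineqs.
have /andP [_ L_range] := allP forest_range L (mem_head _ _).
have m_gt0 := forest_m_gt0.
have [_ _ HL] := B_ge4_bound m_gt0 L_range HB4.
apply: (@no_large_first_path (Z.of_nat n) (Z.of_nat m) (Z.of_nat L)
  (Z.of_nat (nsmall m t)) (Z.of_nat (nlarge m t))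
  (Z.of_nat (deficit m t)) (Z.of_nat (excess m t))); lia.
Qed.

Lemma forest_balanced : 8 <= n -> ~ block_forest_fits (Z.of_nat n) (Z.of_nat L) ->
  all (fun l => (B m l == 3) || (B m l == 4)) t.
Proof.
move=> n8 nofit; have [Hab Hsum Horder [Hem Hda Heb] HnL] := forest_ineqs.
have /andP [_ /andP [L_gt0 _]] := allP forest_range L (mem_head _ _).
have m_gt0 := forest_m_gt0.
have Ha : 0 < nsmall m t by rewrite /nsmall /= forest_first_B_le3.
have [Hde|Hde] := posnP (deficit m t + excess m t).
  by apply: B34_of_balanced; lia.
case: nofit; apply: (@fits_of_forest_bounds (Z.of_nat n) (Z.of_nat m) (Z.of_nat L)
  (Z.of_nat (nsmall m t)) (Z.of_nat (nlarge m t))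
  (Z.of_nat (deficit m t)) (Z.of_nat (excess m t))); lia.
Qed.

End Forest.

Theorem mainTheorem5 (n m : nat) (s : seq nat) :
  8 <= n ->
  sorted_forest n m s ->
  impossibly_burnable m s ->
  is_M n (nth 0 s 0) ->
  (forall i, i < n -> B m (nth 0 s i) = 3 \/ B m (nth 0 s i) = 4) /\
  odd (nth 0 s 0) /\ B m (nth 0 s 0) = 3.
Proof.
move=> n8 forest ib [_ Mmax].
case: s forest ib Mmax => [|L s] forest ib Mmax.
  by case: forest => [[Hsize _ _] _]; move: n8; rewrite -Hsize.
have nofit : ~ block_forest_fits (Z.of_nat n) (Z.of_nat L).
  case/(fits_larger_forest n8) => m' [s' [forest' ib' HL]].
  by have := Mmax _ _ forest' ib'; rewrite leqNgt HL.
have B34 := forest_balanced forest ib n8 nofit.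
have BL3 : B m L = 3.
  by have := forest_first_B_le3 forest ib n8; case/orP: (allP B34 L (mem_head _ _)) => /eqP ->.
split; last split=> //.
  move=> i; case: forest => [[Hsize _ _] _]; rewrite -Hsize => Hi.
  by case/orP: (allP B34 _ (mem_nth 0 Hi)) => /eqP ->; [left | right].
have /andP [_ L_range] := allP (forest_range forest) L (mem_head _ _).
by rewrite /= -(odd_B (forest_m_gt0 forest) L_range) BL3.
Qed.
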